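(* Both drift-plus-penalty (DPP) scheduling algorithms described in the context (the one for average AoI minimization and the one for average peak-AoI minimization) guarantee that the data queue at node $S_1$ is strongly stable. The queue backlog $Q(t)$ of $S_1$ satisfies \[ \limsup_{t\rightarrow \infty} \frac{1}{t}\sum_{\tau=0}^{t-1}\mathbb{E}[Q(\tau)]\leq \frac{C+V}{\epsilon}. \] This inequality holds for any value of $\epsilon$ bounded by $0\leq \epsilon\leq \min\{p_{1/1}-\lambda, \delta\cdot p_{2/1,2}\}$. Here, $C=\frac{\lambda^2+1}{2}$ for the AoI-minimization algorithm and $C=\frac{\alpha_{\max}^2+\lambda^2+2}{2}$ for the peak-AoI-minimization algorithm, and $V$ is a constant weight that affects the tradeoff between performance optimization and queue congestion.
   Context: Time-slotted multiple access channel: two source nodes transmit to a common destination. Node $S_1$ is grid-connected; data packets arrive at its infinite queue as a Bernoulli process $a_1(t)$ with probability $\lambda$, and $Q(t+1)=\max[Q(t)-b_1(t),0]+a_1(t)$, where $b_1(t)=1$ iff a packet of $S_1$ is successfully received in slot $t$. Node $S_2$ is an energy-harvesting sensor: energy arrivals $a_2(t)$ are Bernoulli with probability $\delta$, battery $B(t+1)=\max[B(t)-u_2(t),0]+a_2(t)$, each transmission uses one energy unit, and $H(t)=\mathds{1}\{B(t)>0\}$ (indicator that the battery is non-empty). Scheduling decision $\mathbf{U}(t)=(u_1(t),u_2(t))\in\{(1,1),(1,0),(0,1),(0,0)\}$. Success probabilities: $p_{i/i}$ when only $S_i$ transmits, $p_{i/i,j}$ when both transmit. Conditional success probabilities: $p_1(t)=p_{1/1,2}$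 if $\mathbf{U}(t)=(1,1)$, $p_{1/1}$ if $(1,0)$, $0$ otherwise; $p_2(t)=p_{2/1,2}$ if $(1,1)$, $p_{2/2}$ if $(0,1)$, $0$ otherwise; $b_i(t)$ is the success indicator of $S_i$ given $\mathbf{U}(t)$. The AoI of $S_2$ evolves as $A(t+1)=A(t)+1-H(t)b_2(t)A(t)$. The problem is assumed feasible, $\lambda<p_{1/1}$. AoI-minimization DPP algorithm: in each slot $t$, observe $Q(t),A(t),H(t)$ and choose $\mathbf{U}(t)$ maximizing $p_1(t)Q(t)+V p_2(t)H(t)A(t)$, with $V>0$ a constant penalty weight; then update $Q,B,A$. Peak-AoI-minimization DPP algorithm: with constants $\alpha_{\max}$ (sufficiently large) and $V$, and a virtual queue $Z(t+1)=\max[Z(t)+\alpha(t)-H(t)b_2(t),0]$, $Z(0)=0$: in each slot observe $Q(t),Z(t),H(t)$ and choose $\mathbf{U}(t)$ maximizing $Z(t)H(t)p_2(t)+Q(t)p_1(t)$; set the auxiliary variable $\alpha(t)=\alpha_{\max}$ if $Z(t)\le V$ and $\alpha(t)=0$ otherwise; then update $Q,B,Z$. Both start from $Q(0)=0$, $B(0)=0$. *)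

From Stdlib Require Import Reals List Arith.
From Coquelicot Require Import Coquelicot.
Open Scope R_scope.

Definition decision := (bool * bool)%type.

Definition bern (p : R) (b : bool) : R := if b then p else 1 - p.

Definition p1 (p11 p112 : R) (u : decision) : R :=
  match u with (true, true) => p112 | (true, false) => p11 | _ => 0 end.
Definition p2 (p22 p212 : R) (u : decision) : R :=
  match u with (true, true) => p212 | (false, true) => p22 | _ => 0 end.

(** Joint law of (b1(t), b2(t)) given U(t).  When both transmit, the joint law
    is an arbitrary coupling [pj] with marginals p_{1/1,2}, p_{2/1,2}. *)
Definition succ_prob (p11 p22 : R) (pj : bool -> bool -> R) (u : decision)
    (b1 b2 : bool) : R :=
  match u with
  | (true, true) => pj b1 b2
  | (true, false) => if b2 then 0 else bern p11 b1
  | (false, true) => if b1 then 0 else bern p22 b2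
  | (false, false) => if orb b1 b2 then 0 else 1
  end.

Definition bools : list bool := true :: false :: nil.
Definition outcomes : list (bool * bool * bool * bool) :=
  flat_map (fun a1 => flat_map (fun a2 => flat_map (fun b1 =>
    map (fun b2 => (a1, a2, b1, b2)) bools) bools) bools) bools.

Definition slot_prob (lam delta p11 p22 : R) (pj : bool -> bool -> R)
    (u : decision) (o : bool * bool * bool * bool) : R :=
  let '(a1, a2, b1, b2) := o in
  bern lam a1 * bern delta a2 * succ_prob p11 p22 pj u b1 b2.

(** Expectation of [f] of the state of a finite-branching Markov chain, [n]
    slots after being in state [s] at time [t]; [step t s] lists the
    (probability, next state) pairs of the transition at slot [t]. *)
Fixpoint expect {St : Type} (step : nat -> St -> list (R * St)) (n t : nat)
    (s : St) (f : St -> R) : R :=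
  match n with
  | O => f s
  | S n' => fold_right (fun ps acc => fst ps * expect step n' (S t) (snd ps) f + acc)
              0 (step t s)
  end.

Definition Hn (B : nat) : nat := if Nat.ltb 0 B then 1%nat else 0%nat.

Definition aoi_obj (p11 p22 p112 p212 V : R) (Q B A : nat) (u : decision) : R :=
  p1 p11 p112 u * INR Q + V * p2 p22 p212 u * INR (Hn B) * INR A.

(** The policy picks, in every slot and every state, a maximizer of the
    DPP objective (ties broken arbitrarily, possibly time-dependently). *)
Definition aoi_maximizer (p11 p22 p112 p212 V : R)
    (pol : nat -> nat -> nat -> nat -> decision) : Prop :=
  forall t Q B A (u : decision),
    aoi_obj p11 p22 p112 p212 V Q B A u
      <= aoi_obj p11 p22 p112 p212 V Q B A (pol t Q B A).

Definition aoi_next (u : decision) (s : nat * nat * nat)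
    (o : bool * bool * bool * bool) : nat * nat * nat :=
  let '(Q, B, A) := s in
  let '(a1, a2, b1, b2) := o in
  ((Q - Nat.b2n b1) + Nat.b2n a1,
   (B - Nat.b2n (snd u)) + Nat.b2n a2,
   A + 1 - Hn B * Nat.b2n b2 * A)%nat.

Definition aoi_step (lam delta p11 p22 : R) (pj : bool -> bool -> R)
    (pol : nat -> nat -> nat -> nat -> decision) (t : nat) (s : nat * nat * nat)
    : list (R * (nat * nat * nat)) :=
  let '(Q, B, A) := s in
  let u := pol t Q B A in
  map (fun o => (slot_prob lam delta p11 p22 pj u o, aoi_next u s o)) outcomes.

Definition EQ_aoi (lam delta p11 p22 : R) (pj : bool -> bool -> R)
    (pol : nat -> nat -> nat -> nat -> decision) (A0 : nat) (tau : nat) : R :=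
  expect (aoi_step lam delta p11 p22 pj pol) tau 0 (0%nat, 0%nat, A0)
    (fun s => let '(Q, _, _) := s in INR Q).

Definition peak_obj (p11 p22 p112 p212 : R) (Q B : nat) (Z : R) (u : decision) : R :=
  Z * INR (Hn B) * p2 p22 p212 u + INR Q * p1 p11 p112 u.

Definition peak_maximizer (p11 p22 p112 p212 : R)
    (pol : nat -> nat -> nat -> R -> decision) : Prop :=
  forall t Q B Z (u : decision),
    peak_obj p11 p22 p112 p212 Q B Z u
      <= peak_obj p11 p22 p112 p212 Q B Z (pol t Q B Z).

Definition alpha (amax V Z : R) : R := if Rle_dec Z V then amax else 0.

Definition peak_next (amax V : R) (u : decision) (s : nat * nat * R)
    (o : bool * bool * bool * bool) : nat * nat * R :=
  let '(Q, B, Z) := s in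
  let '(a1, a2, b1, b2) := o in
  ((Q - Nat.b2n b1) + Nat.b2n a1,
   (B - Nat.b2n (snd u)) + Nat.b2n a2,
   Rmax (Z + alpha amax V Z - INR (Hn B) * INR (Nat.b2n b2)) 0)%nat.

Definition peak_step (lam delta p11 p22 amax V : R) (pj : bool -> bool -> R)
    (pol : nat -> nat -> nat -> R -> decision) (t : nat) (s : nat * nat * R)
    : list (R * (nat * nat * R)) :=
  let '(Q, B, Z) := s in
  let u := pol t Q B Z in
  map (fun o => (slot_prob lam delta p11 p22 pj u o, peak_next amax V u s o)) outcomes.

Definition EQ_peak (lam delta p11 p22 amax V : R) (pj : bool -> bool -> R)
    (pol : nat -> nat -> nat -> R -> decision) (tau : nat) : R :=
  expect (peak_step lam delta p11 p22 amax V pj pol) tau 0 (0%nat, 0%nat, 0)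
    (fun s => let '(Q, _, _) := s in INR Q).

Definition time_avg (x : nat -> R) (t : nat) : R :=
  / INR t * fold_right Rplus 0 (map x (seq 0 t)).

From Stdlib Require Import Reals List Lra Lia.
From Coquelicot Require Import Coquelicot.
Open Scope R_scope.

(* Both statements are instances of the Foster-Lyapunov drift theorem for a
   finite-branching chain: if E[Phi(X') | X = s] <= Phi(s) + K - eps * Q(s) and
   Phi >= 0, summing over n slots gives eps * sum_{k<n} E[Q(k)] <= Phi(s0) + n K,
   hence a time-average backlog of at most K / eps.  The negative drift comes
   from comparing the DPP decision with the decision (1,0) in which S_1
   transmits alone: the maximised objective is at least p_{1/1} Q, while the
   expected one-slot increase of Q^2/2 is at most 1/2 + (lam - p_1) Q.  For the
   AoI algorithm the Lyapunov function is Q^2/2 + V A, whose V A part pays for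
   the AoI term of the objective; for the peak-AoI algorithm it is Q^2/2, and
   the term Z H p_2 of the objective stays below V + amax because the virtual
   queue Z never leaves [0, V + amax]. *)

Definition wsum {St : Type} (l : list (R * St)) (F : St -> R) : R :=
  fold_right (fun ps acc => fst ps * F (snd ps) + acc) 0 l.

Section WeightedSums.
Context {St : Type}.
Implicit Types (l : list (R * St)) (F G : St -> R).

Lemma wsum_plus l F G : wsum l (fun s => F s + G s) = wsum l F + wsum l G.
Proof. induction l as [|x l IH]; unfold wsum in *; simpl; [ring|rewrite IH; ring]. Qed.

Lemma wsum_scal l c F : wsum l (fun s => c * F s) = c * wsum l F.
Proof. induction l as [|x l IH]; unfold wsum in *; simpl; [ring|rewrite IH; ring]. Qed.

Lemma wsum_const l c : wsum l (fun _ => c) = c * wsum l (fun _ => 1).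
Proof. induction l as [|x l IH]; unfold wsum in *; simpl; [ring|rewrite IH; ring]. Qed.

Lemma wsum_le l F G :
  (forall x, In x l -> 0 <= fst x /\ F (snd x) <= G (snd x)) ->
  wsum l F <= wsum l G.
Proof.
  induction l as [|x l IH]; intros H; unfold wsum in *; simpl; [lra|].
  destruct (H x (or_introl eq_refl)) as [Hx HFG].
  assert (Hl : fold_right (fun ps acc => fst ps * F (snd ps) + acc) 0 l <=
               fold_right (fun ps acc => fst ps * G (snd ps) + acc) 0 l)
    by (apply IH; intros; apply H; right; assumption).
  pose proof (Rmult_le_compat_l _ _ _ Hx HFG). lra.
Qed.

Lemma wsum_sum l (H : nat -> St -> R) (ks : list nat) :
  fold_right Rplus 0 (map (fun k => wsum l (H k)) ks) =
  wsum l (fun s => fold_right Rplus 0 (map (fun k => H k s) ks)).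
Proof.
  induction ks as [|k ks IH]; simpl.
  - rewrite wsum_const. ring.
  - rewrite IH, <- wsum_plus. reflexivity.
Qed.

Lemma wsum_map_snd {O : Type} (os : list O) (w : O -> R) (next : O -> St) F :
  wsum (map (fun o => (w o, next o)) os) F =
  wsum (map (fun o => (w o, o)) os) (fun o => F (next o)).
Proof. induction os as [|o os IH]; unfold wsum in *; simpl; [|rewrite IH]; reflexivity. Qed.

End WeightedSums.

Lemma LimSup_le_of_bound (u : nat -> R) (c d : R) :
  (forall n, (1 <= n)%nat -> u n <= c + d / INR n) ->
  Rbar_le (LimSup_seq u) (Finite c).
Proof.
  intros H.
  assert (Hlim : is_lim_seq (fun n => c + d * / INR n) (c + d * 0)).
  { apply is_lim_seq_plus'; [apply is_lim_seq_const|].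
    apply (is_lim_seq_scal_l _ d (Finite 0)).
    replace (Finite 0) with (Rbar_inv p_infty) by reflexivity.
    apply is_lim_seq_inv; [apply is_lim_seq_INR|discriminate]. }
  rewrite Rmult_0_r, Rplus_0_r in Hlim.
  apply is_lim_LimSup_seq, is_LimSup_seq_unique in Hlim.
  rewrite <- Hlim. apply LimSup_le. exists 1%nat. exact H.
Qed.

Section DriftTheorem.
Context {St : Type} (step : nat -> St -> list (R * St)) (I : St -> Prop).
Hypothesis step_closed :
  forall t s, I s -> forall x, In x (step t s) -> 0 <= fst x /\ I (snd x).
Hypothesis step_mass : forall t s, I s -> wsum (step t s) (fun _ => 1) = 1.

Definition expect_sum (g : St -> R) (n t : nat) (s : St) : R :=
  fold_right Rplus 0 (map (fun k => expect step k t s g) (seq 0 n)).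

Lemma expect_S n t s f :
  expect step (S n) t s f = wsum (step t s) (fun s' => expect step n (S t) s' f).
Proof. reflexivity. Qed.

Lemma expect_sum_S g n t s :
  expect_sum g (S n) t s = g s + wsum (step t s) (expect_sum g n (S t)).
Proof.
  unfold expect_sum. simpl. f_equal.
  rewrite <- seq_shift, map_map.
  exact (wsum_sum (step t s) (fun k s' => expect step k (S t) s' g) (seq 0 n)).
Qed.

Lemma expect_nonneg f :
  (forall s, I s -> 0 <= f s) -> forall n t s, I s -> 0 <= expect step n t s f.
Proof.
  intros Hf n. induction n as [|n IH]; intros t s Hs; [exact (Hf s Hs)|].
  rewrite expect_S.
  apply Rle_trans with (wsum (step t s) (fun _ => 0)).
  - rewrite wsum_const. lra.
  - apply wsum_le. intros x Hx. destruct (step_closed t s Hs x Hx).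
    split; [|apply IH]; assumption.
Qed.

Variables (Phi g : St -> R) (K eps : R).
Hypothesis drift : forall t s, I s -> wsum (step t s) Phi <= Phi s + K - eps * g s.

Lemma drift_expect_sum n t s :
  I s -> eps * expect_sum g n t s + expect step n t s Phi <= Phi s + INR n * K.
Proof.
  revert t s. induction n as [|n IH]; intros t s Hs.
  - unfold expect_sum; simpl. lra.
  - rewrite expect_sum_S, expect_S, S_INR.
    assert (Hstep : wsum (step t s)
                      (fun s' => eps * expect_sum g n (S t) s' + expect step n (S t) s' Phi)
                    <= wsum (step t s) (fun s' => Phi s' + INR n * K)).
    { apply wsum_le. intros x Hx. destruct (step_closed t s Hs x Hx).
      split; [|apply IH]; assumption. }
    rewrite wsum_plus, wsum_scal in Hstep.
    rewrite wsum_plus, wsum_const, step_mass in Hstep by exact Hs.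
    pose proof (drift t s Hs). lra.
Qed.

Hypothesis eps_pos : 0 < eps.
Hypothesis Phi_nonneg : forall s, I s -> 0 <= Phi s.

Theorem LimSup_time_avg_le s0 :
  I s0 -> Rbar_le (LimSup_seq (time_avg (fun n => expect step n 0 s0 g)))
                  (Finite (K / eps)).
Proof.
  intros Hs0. apply LimSup_le_of_bound with (d := Phi s0 / eps). intros n Hn.
  change (/ INR n * expect_sum g n 0 s0 <= K / eps + Phi s0 / eps / INR n).
  pose proof (drift_expect_sum n 0 s0 Hs0).
  pose proof (expect_nonneg Phi Phi_nonneg n 0 s0 Hs0).
  assert (Hn_pos : 0 < INR n) by (apply lt_0_INR; lia).
  assert (Hsum : expect_sum g n 0 s0 <= (Phi s0 + INR n * K) / eps).
  { apply Rmult_le_reg_l with eps; [exact eps_pos|]. field_simplify; lra. }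
  apply Rle_trans with (/ INR n * ((Phi s0 + INR n * K) / eps)).
  - apply Rmult_le_compat_l; [left; apply Rinv_0_lt_compat|]; assumption.
  - right. field. lra.
Qed.

End DriftTheorem.

Definition b2r (b : bool) : R := if b then 1 else 0.

Definition backlog {X Y : Type} (s : nat * X * Y) : R := let '(Q, _, _) := s in INR Q.

Lemma sq_backlog_next_le Q a1 b1 :
  INR ((Q - Nat.b2n b1) + Nat.b2n a1) ^ 2 / 2 <=
  INR Q ^ 2 / 2 + INR Q * (b2r a1 - b2r b1) + 1 / 2.
Proof.
  pose proof (pos_INR Q).
  destruct a1, b1, Q as [|q]; unfold b2r; simpl Nat.b2n;
    rewrite ?Nat.sub_0_r, ?Nat.add_0_r; simpl Nat.sub;
    rewrite ?Nat.sub_0_r, ?plus_INR, ?S_INR; simpl INR; nra.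
Qed.

Lemma Hn_cases B : Hn B = 0%nat \/ Hn B = 1%nat.
Proof. unfold Hn. destruct (Nat.ltb 0 B); auto. Qed.

(* Truncated subtraction is harmless here: H * b2 * A <= A < A + 1. *)
Lemma INR_aoi_next A B b2 :
  INR (A + 1 - Hn B * Nat.b2n b2 * A) = INR A + 1 - INR (Hn B) * b2r b2 * INR A.
Proof.
  destruct (Hn_cases B) as [-> | ->], b2; unfold b2r; simpl Nat.b2n;
    [replace (A + 1 - 0 * 1 * A)%nat with (A + 1)%nat by lia
    |replace (A + 1 - 0 * 0 * A)%nat with (A + 1)%nat by lia
    |replace (A + 1 - 1 * 1 * A)%nat with 1%nat by lia
    |replace (A + 1 - 1 * 0 * A)%nat with (A + 1)%nat by lia];
    rewrite ?plus_INR; simpl; ring.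
Qed.

Lemma bern_nonneg p b : 0 <= p <= 1 -> 0 <= bern p b.
Proof. destruct b; simpl; lra. Qed.

Lemma p2_bounds p22 p212 u : 0 <= p22 <= 1 -> 0 <= p212 <= 1 -> 0 <= p2 p22 p212 u <= 1.
Proof. destruct u as [[|] [|]]; simpl; lra. Qed.

Section Model.
Variables (lam delta p11 p22 p112 p212 : R) (pj : bool -> bool -> R).
Hypotheses (lam_prob : 0 <= lam <= 1) (delta_prob : 0 <= delta <= 1)
  (p11_prob : 0 <= p11 <= 1) (p22_prob : 0 <= p22 <= 1) (p212_prob : 0 <= p212 <= 1)
  (pj_nonneg : forall b1 b2, 0 <= pj b1 b2)
  (pj_mass : pj true true + pj true false + pj false true + pj false false = 1)
  (pj_marg1 : pj true true + pj true false = p112)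
  (pj_marg2 : pj true true + pj false true = p212).

Definition slot_law (u : decision) : list (R * (bool * bool * bool * bool)) :=
  map (fun o => (slot_prob lam delta p11 p22 pj u o, o)) outcomes.

Lemma slot_prob_nonneg u o : 0 <= slot_prob lam delta p11 p22 pj u o.
Proof.
  destruct o as [[[a1 a2] b1] b2]. unfold slot_prob.
  apply Rmult_le_pos; [apply Rmult_le_pos; apply bern_nonneg; assumption|].
  destruct u as [[|] [|]], b1, b2; simpl;
    solve [lra | apply pj_nonneg | apply bern_nonneg; assumption].
Qed.

Lemma slot_law_le u F G :
  (forall o, F o <= G o) -> wsum (slot_law u) F <= wsum (slot_law u) G.
Proof.
  intros HFG. apply wsum_le. intros x Hx. unfold slot_law in Hx.
  apply in_map_iff in Hx. destruct Hx as [o [<- _]].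
  split; [apply slot_prob_nonneg|apply HFG].
Qed.

(* Affine functions of the outcome only see the marginals of the coupling pj. *)
Lemma slot_law_affine u c x y z :
  wsum (slot_law u) (fun o => let '(a1, _, b1, b2) := o in
                              c + x * b2r a1 + y * b2r b1 + z * b2r b2) =
  c + x * lam + y * p1 p11 p112 u + z * p2 p22 p212 u.
Proof.
  rewrite <- pj_marg1, <- pj_marg2.
  assert (E : pj false false = 1 - pj true true - pj true false - pj false true) by lra.
  destruct u as [[|] [|]]; unfold slot_law, wsum; simpl; rewrite ?E; ring.
Qed.

Lemma slot_law_mass u : wsum (slot_law u) (fun _ => 1) = 1.
Proof.
  transitivity (1 + 0 * lam + 0 * p1 p11 p112 u + 0 * p2 p22 p212 u); [|ring].
  rewrite <- slot_law_affine. unfold slot_law, wsum; simpl. ring.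
Qed.

Section AoIAlgorithm.
Variables (V eps : R) (pol : nat -> nat -> nat -> nat -> decision).
Hypotheses (eps_le : eps <= p11 - lam)
  (pol_max : aoi_maximizer p11 p22 p112 p212 V pol).

Definition aoi_lyap (s : nat * nat * nat) : R :=
  let '(Q, _, A) := s in INR Q ^ 2 / 2 + V * INR A.

Lemma aoi_obj_ge_solo t Q B A :
  p11 * INR Q <= aoi_obj p11 p22 p112 p212 V Q B A (pol t Q B A).
Proof.
  eapply Rle_trans; [|apply (pol_max t Q B A (true, false))].
  unfold aoi_obj; simpl. right; ring.
Qed.

Lemma aoi_step_mean t Q B A F :
  wsum (aoi_step lam delta p11 p22 pj pol t (Q, B, A)) F =
  wsum (slot_law (pol t Q B A)) (fun o => F (aoi_next (pol t Q B A) (Q, B, A) o)).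
Proof. apply wsum_map_snd. Qed.

Lemma aoi_drift t s :
  wsum (aoi_step lam delta p11 p22 pj pol t s) aoi_lyap <=
  aoi_lyap s + ((lam ^ 2 + 1) / 2 + V) - eps * backlog s.
Proof.
  destruct s as [[Q B] A]. rewrite aoi_step_mean.
  set (u := pol t Q B A).
  assert (Hmean := slot_law_affine u (INR Q ^ 2 / 2 + V * INR A + 1 / 2 + V)
                     (INR Q) (- INR Q) (- (V * INR (Hn B) * INR A))).
  assert (Hle : wsum (slot_law u) (fun o => aoi_lyap (aoi_next u (Q, B, A) o)) <=
                wsum (slot_law u) (fun o => let '(a1, _, b1, b2) := o in
                  INR Q ^ 2 / 2 + V * INR A + 1 / 2 + V + INR Q * b2r a1
                  + - INR Q * b2r b1 + - (V * INR (Hn B) * INR A) * b2r b2)).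
  { apply slot_law_le. intros [[[a1 a2] b1] b2]. unfold aoi_next, aoi_lyap.
    rewrite INR_aoi_next. pose proof (sq_backlog_next_le Q a1 b1). lra. }
  pose proof (aoi_obj_ge_solo t Q B A) as Hsolo. fold u in Hsolo.
  unfold aoi_obj in Hsolo.
  change (aoi_lyap (Q, B, A)) with (INR Q ^ 2 / 2 + V * INR A).
  change (backlog (Q, B, A)) with (INR Q).
  assert (eps * INR Q <= (p11 - lam) * INR Q)
    by (apply Rmult_le_compat_r; [apply pos_INR|exact eps_le]).
  pose proof (pow2_ge_0 lam). nra.
Qed.

End AoIAlgorithm.

Section PeakAoIAlgorithm.
Variables (V amax eps : R) (pol : nat -> nat -> nat -> R -> decision).
Hypotheses (eps_le : eps <= p11 - lam)
  (pol_max : peak_maximizer p11 p22 p112 p212 pol).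

Definition Z_bounded (s : nat * nat * R) : Prop :=
  let '(_, _, Z) := s in 0 <= Z <= V + amax.

Lemma peak_step_closed t s x :
  Z_bounded s -> In x (peak_step lam delta p11 p22 amax V pj pol t s) ->
  0 <= fst x /\ Z_bounded (snd x).
Proof.
  intros HZ Hx. destruct s as [[Q B] Z]. unfold peak_step in Hx.
  apply in_map_iff in Hx. destruct Hx as [[[[a1 a2] b1] b2] [<- _]].
  split; [apply slot_prob_nonneg|]. simpl in HZ |- *.
  assert (0 <= INR (Hn B) * INR (Nat.b2n b2)) by (apply Rmult_le_pos; apply pos_INR).
  split; [apply Rmax_r|]. apply Rmax_lub; [|lra].
  unfold alpha. destruct (Rle_dec Z V); lra.
Qed.

Lemma peak_obj_ge_solo t Q B Z :
  0 <= Z <= V + amax ->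
  p11 * INR Q <= INR Q * p1 p11 p112 (pol t Q B Z) + (V + amax).
Proof.
  intros HZ.
  pose proof (pol_max t Q B Z (true, false)) as Hsolo. unfold peak_obj in Hsolo.
  simpl p1 in Hsolo; simpl p2 in Hsolo.
  pose proof (p2_bounds p22 p212 (pol t Q B Z) p22_prob p212_prob).
  assert (Z * INR (Hn B) * p2 p22 p212 (pol t Q B Z) <= V + amax).
  { destruct (Hn_cases B) as [-> | ->]; simpl INR; nra. }
  lra.
Qed.

Lemma peak_step_mean t Q B Z F :
  wsum (peak_step lam delta p11 p22 amax V pj pol t (Q, B, Z)) F =
  wsum (slot_law (pol t Q B Z))
       (fun o => F (peak_next amax V (pol t Q B Z) (Q, B, Z) o)).
Proof. apply wsum_map_snd. Qed.

Lemma peak_drift t s :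
  Z_bounded s ->
  wsum (peak_step lam delta p11 p22 amax V pj pol t s) (fun s => backlog s ^ 2 / 2) <=
  backlog s ^ 2 / 2 + ((amax ^ 2 + lam ^ 2 + 2) / 2 + V) - eps * backlog s.
Proof.
  intros HZ. destruct s as [[Q B] Z]. rewrite peak_step_mean.
  set (u := pol t Q B Z).
  assert (Hmean := slot_law_affine u (INR Q ^ 2 / 2 + 1 / 2) (INR Q) (- INR Q) 0).
  assert (Hle : wsum (slot_law u)
                  (fun o => backlog (peak_next amax V u (Q, B, Z) o) ^ 2 / 2) <=
                wsum (slot_law u) (fun o => let '(a1, _, b1, b2) := o in
                  INR Q ^ 2 / 2 + 1 / 2 + INR Q * b2r a1 + - INR Q * b2r b1 + 0 * b2r b2)).
  { apply slot_law_le. intros [[[a1 a2] b1] b2]. unfold peak_next, backlog.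
    pose proof (sq_backlog_next_le Q a1 b1). lra. }
  pose proof (peak_obj_ge_solo t Q B Z HZ) as Hsolo. fold u in Hsolo.
  change (backlog (Q, B, Z)) with (INR Q).
  assert (eps * INR Q <= (p11 - lam) * INR Q)
    by (apply Rmult_le_compat_r; [apply pos_INR|exact eps_le]).
  pose proof (pow2_ge_0 lam). pose proof (pow2_ge_0 (amax - 1)). nra.
Qed.

End PeakAoIAlgorithm.

End Model.

Theorem lemma4
  (lam delta p11 p22 p112 p212 V amax eps : R) (pj : bool -> bool -> R)
  (A0 : nat)
  (pol_aoi : nat -> nat -> nat -> nat -> decision)
  (pol_peak : nat -> nat -> nat -> R -> decision) :
  0 <= lam <= 1 -> 0 <= delta <= 1 ->
  0 <= p11 <= 1 -> 0 <= p22 <= 1 -> 0 <= p112 <= 1 -> 0 <= p212 <= 1 ->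
  (forall b1 b2, 0 <= pj b1 b2) ->
  pj true true + pj true false + pj false true + pj false false = 1 ->
  pj true true + pj true false = p112 ->
  pj true true + pj false true = p212 ->
  lam < p11 ->
  0 < V -> 0 <= amax ->
  0 < eps -> eps <= Rmin (p11 - lam) (delta * p212) ->
  aoi_maximizer p11 p22 p112 p212 V pol_aoi ->
  peak_maximizer p11 p22 p112 p212 pol_peak ->
  Rbar_le (LimSup_seq (time_avg (EQ_aoi lam delta p11 p22 pj pol_aoi A0)))
          (Finite (((lam ^ 2 + 1) / 2 + V) / eps)) /\
  Rbar_le (LimSup_seq (time_avg (EQ_peak lam delta p11 p22 amax V pj pol_peak)))
          (Finite (((amax ^ 2 + lam ^ 2 + 2) / 2 + V) / eps)).
Proof.
  intros Hlam Hdel Hp11 Hp22 _ Hp212 Hpj Hmass Hm1 Hm2 _ HV Hamax Heps Heps_min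
    Hmax_aoi Hmax_peak.
  assert (Heps_le : eps <= p11 - lam) by exact (Rle_trans _ _ _ Heps_min (Rmin_l _ _)).
  split.
  - apply LimSup_time_avg_le with (I := fun _ => True) (Phi := aoi_lyap V); auto.
    + intros t [[Q B] A] _ x Hx. unfold aoi_step in Hx. apply in_map_iff in Hx.
      destruct Hx as [o [<- _]]. split; [apply slot_prob_nonneg|]; auto.
    + intros t [[Q B] A] _. rewrite aoi_step_mean. apply (slot_law_mass _ _ _ _ p112 p212); auto.
    + intros t s _. apply (aoi_drift _ _ _ _ p112 p212); auto.
    + intros [[Q B] A] _. simpl. pose proof (pos_INR Q); pose proof (pos_INR A). nra.
  - apply LimSup_time_avg_le
      with (I := Z_bounded V amax) (Phi := fun s => backlog s ^ 2 / 2); auto.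
    + intros t s HZ x Hx. eapply peak_step_closed; [..|exact HZ|exact Hx]; auto.
    + intros t [[Q B] Z] _. rewrite peak_step_mean. apply (slot_law_mass _ _ _ _ p112 p212); auto.
    + intros t s HZ. apply (peak_drift _ _ _ _ p112 p212); auto.
    + intros s _. pose proof (pow2_ge_0 (backlog s)). lra.
    + simpl. lra.
Qed.
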